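(* Let $n\ge2$ and let $\lambda_1,\dots,\lambda_n$ be real numbers with $\lambda_i\ne\lambda_j$ for $i\neq j$. Let $\sigma:\{1,\dots,n\}\to\{1,\dots,n\}$ be a permutation different from the identity, and let $M$ be the $n\times n$ matrix with entries $$M_{ij}=\lambda_j^{\,i}-\lambda_{\sigma(j)}^{\,i},\qquad 1\le i,j\le n.$$ If $v=(v_1,\dots,v_n)\in\mathbb{R}^n$ satisfies $Mv^T=0$, then there are two indices $i\neq j$ such that $v_i=v_j$. *)

From mathcomp Require Import all_boot all_order all_algebra all_fingroup.
From mathcomp Require Import reals.
Set Implicit Arguments. Unset Strict Implicit. Unset Printing Implicit Defensive.
Import GRing.Theory Num.Theory.
Local Open Scope ring_scope.

(* M_{ij} = lambda_j^i - lambda_{sigma j}^i, 1 <= i,j <= n;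
   indices are 0-based ordinals, so the exponent is (i+1). *)
Definition Mmat (R : ringType) (n : nat) (lam : 'I_n -> R) (s : 'S_n) : 'M[R]_n :=
  \matrix_(i < n, j < n) (lam j ^+ i.+1 - lam (s j) ^+ i.+1).

From mathcomp Require Import all_boot all_order all_algebra all_fingroup.
From mathcomp Require Import reals.
Set Implicit Arguments. Unset Strict Implicit. Unset Printing Implicit Defensive.
Import GRing.Theory Num.Theory.
Local Open Scope ring_scope.

(* Reindexing the second half of each row sum by [sigma] turns [M v = 0] into
   [sum_k lambda_k^i (lambda_k w_k) = 0] for i < n, where
   [w_k = v_k - v_(sigma^-1 k)]; as the Vandermonde matrix of the distinct
   [lambda_k] is invertible, [lambda_k w_k = 0] for every k.  At most one
   [lambda_k] vanishes and a non-identity permutation moves at least two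
   points, so some k with [lambda_k <> 0] is moved by [sigma^-1], and then
   [v_k = v_(sigma^-1 k)]. *)

Lemma det_Vandermonde_neq0 (R : idomainType) (n : nat) (a : 'rV[R]_n) :
  injective (a 0) -> \det (Vandermonde n a) != 0.
Proof.
move=> a_inj; rewrite det_Vandermonde; apply/prodf_neq0 => i _.
apply/prodf_neq0 => j lt_ij; rewrite subr_eq0; apply/eqP => /a_inj eq_ji.
by rewrite eq_ji ltnn in lt_ij.
Qed.

Lemma Vandermonde_mulmx_eq0 (R : idomainType) (n p : nat) (a : 'rV[R]_n)
    (c : 'M[R]_(n, p)) :
  injective (a 0) -> Vandermonde n a *m c = 0 -> c = 0.
Proof.
move=> a_inj Vc0; apply/eqP.
have: \adj (Vandermonde n a) *m (Vandermonde n a *m c) == 0.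
  by rewrite Vc0 mulmx0.
rewrite mulmxA mul_adj_mx mul_scalar_mx scalemx_eq0.
by rewrite (negbTE (det_Vandermonde_neq0 a_inj)).
Qed.

Lemma power_sums_eq0 (R : idomainType) (n : nat) (lam c : 'I_n -> R) :
  injective lam -> (forall i : 'I_n, \sum_k lam k ^+ i * c k = 0) ->
  forall k, c k = 0.
Proof.
move=> lam_inj sums0 k.
have /matrixP/(_ k 0) : \col_k c k = 0.
  apply: (@Vandermonde_mulmx_eq0 _ _ _ (\row_k lam k)).
    by move=> i j; rewrite !mxE => /lam_inj.
  apply/matrixP => i j; rewrite !mxE -[RHS](sums0 i).
  by apply: eq_bigr => l _; rewrite !mxE.
by rewrite !mxE.
Qed.

Lemma Mmat_mulmx_col (R : nzRingType) (n : nat) (lam : 'I_n -> R) (s : 'S_n)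
    (v : 'cV[R]_n) (i : 'I_n) :
  (Mmat lam s *m v) i 0 = \sum_k lam k ^+ i.+1 * (v k 0 - v ((s^-1)%g k) 0).
Proof.
rewrite mxE; under eq_bigr do rewrite mxE mulrBl.
under [RHS]eq_bigr do rewrite mulrBr.
rewrite !sumrB; congr (_ - _).
by rewrite [RHS](reindex_inj (@perm_inj _ s)); apply: eq_bigr => k _; rewrite permK.
Qed.

Lemma perm_moves_point_off_value (T : finType) (U : eqType) (f : T -> U)
    (y : U) (s : {perm T}) :
  injective f -> s != 1%g -> exists2 k, s k != k & f k != y.
Proof.
move=> f_inj s_neq1.
have /existsP [k sk_neq_k] : [exists k, s k != k].
  apply: contraNT s_neq1 => /existsPn fixed; apply/eqP/permP => x.
  by rewrite perm1; apply/eqP/negPn/fixed.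
have [fk_y | fk_neq_y] := eqVneq (f k) y; last by exists k.
exists (s k); first by rewrite (inj_eq perm_inj).
by apply: contraNneq sk_neq_k; rewrite -fk_y => /f_inj ->.
Qed.

Theorem lemma5p2 (R : realType) (n : nat) (hn : (2 <= n)%N)
  (lam : 'I_n -> R) (hlam : injective lam) (s : 'S_n) (hs : s != 1%g)
  (v : 'cV[R]_n) (hv : Mmat lam s *m v = 0) :
  exists i j : 'I_n, i != j /\ v i 0 = v j 0.
Proof.
pose w k := v k 0 - v ((s^-1)%g k) 0.
have lam_w0 : forall k, lam k * w k = 0.
  apply: power_sums_eq0 hlam _ => i.
  transitivity ((Mmat lam s *m v) i 0); last by rewrite hv mxE.
  by rewrite Mmat_mulmx_col; apply: eq_bigr => k _; rewrite exprS mulrCA mulrA.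
have [k sk_neq_k lamk_neq0] : exists2 k, (s^-1)%g k != k & lam k != 0.
  by apply: perm_moves_point_off_value hlam _; rewrite invg_eq1.
exists k, ((s^-1)%g k); split; first by rewrite eq_sym.
apply/eqP; rewrite -subr_eq0.
by have /eqP := lam_w0 k; rewrite mulf_eq0 (negbTE lamk_neq0).
Qed.
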